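(* Let $\mathcal{H}$ be a complex Hilbert space, $A\in\mathcal{B}(\mathcal{H})$ positive and $S\in\mathcal{B}_A(\mathcal{H})$. Then $$d\omega_A^2(S)\le\left\|SS^{\sharp_A}+\left(S^{\sharp_A}S\right)^2\right\|_A^{1/2}\left\|S^{\sharp_A}S+\left(S^{\sharp_A}S\right)^2\right\|_A^{1/2}.$$
   Context: $\mathcal{B}(\mathcal{H})$ denotes the bounded linear operators on $\mathcal{H}$. For positive $A$, $\langle x,z\rangle_A=\langle Ax,z\rangle$ and $\|z\|_A=\|A^{1/2}z\|$. $\mathcal{B}_A(\mathcal{H})$ is the set of $S\in\mathcal{B}(\mathcal{H})$ for which some $R\in\mathcal{B}(\mathcal{H})$ satisfies $AR=S^*A$; for such $S$, $S^{\sharp_A}=A^{\dagger}S^*A$ with $A^\dagger$ the Moore–Penrose inverse of $A$. For operators $T$ bounded with respect to $\|\cdot\|_A$: $\|T\|_A=\sup_{\|z\|_A=1}\|Tz\|_A$ and $d\omega_A(T)=\sup_{\|z\|_A=1}(|\langle Tz,z\rangle_A|^2+\|Tz\|_A^4)^{1/2}$. *)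

From HB Require Import structures.
From mathcomp Require Import all_boot all_order all_algebra.
From mathcomp Require Import boolp classical_sets reals.
From mathcomp Require Export complex.
Set Implicit Arguments. Unset Strict Implicit. Unset Printing Implicit Defensive.
Import Order.TTheory GRing.Theory Num.Theory.
Local Open Scope ring_scope.
Local Open Scope classical_set_scope.

Definition inner_product (R : realType) (V : lmodType R[i])
  (ip : V -> V -> R[i]) : Prop :=
  [/\ (forall (a : R[i]) (x y z : V), ip (a *: x + y) z = a * ip x z + ip y z),
      (forall x y : V, ip y x = (ip x y)^*),
      (forall x : V, 0 <= ip x x) &
      (forall x : V, ip x x = 0 -> x = 0)].

Definition hnorm (R : realType) (V : lmodType R[i]) (ip : V -> V -> R[i])
  (x : V) : R := Num.sqrt (@complex.Re R (ip x x)).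

Definition complete_ip (R : realType) (V : lmodType R[i])
  (ip : V -> V -> R[i]) : Prop :=
  forall u : nat -> V,
    (forall e : R, 0 < e -> exists N : nat, forall m n : nat,
        (N <= m)%N -> (N <= n)%N -> hnorm ip (u m - u n) < e) ->
    exists l : V, forall e : R, 0 < e -> exists N : nat, forall n : nat,
        (N <= n)%N -> hnorm ip (u n - l) < e.

Definition bounded_op (R : realType) (V : lmodType R[i]) (ip : V -> V -> R[i])
  (T : V -> V) : Prop :=
  (forall (a : R[i]) (x y : V), T (a *: x + y) = a *: T x + T y) /\
  exists M : R, forall x : V, hnorm ip (T x) <= M * hnorm ip x.

Definition positive_op (R : realType) (V : lmodType R[i]) (ip : V -> V -> R[i])
  (A : V -> V) : Prop :=
  bounded_op ip A /\ forall x : V, 0 <= ip (A x) x.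

Definition is_adjoint (R : realType) (V : lmodType R[i]) (ip : V -> V -> R[i])
  (T Ts : V -> V) : Prop :=
  forall x y : V, ip (T x) y = ip x (Ts y).

(* S in B_A(H): some R in B(H) satisfies A R = S^* A  (Sadj is the adjoint S^* of S). *)
Definition in_BA (R : realType) (V : lmodType R[i]) (ip : V -> V -> R[i])
  (A Sadj : V -> V) : Prop :=
  exists Rop : V -> V, bounded_op ip Rop /\ forall x : V, A (Rop x) = Sadj (A x).

(* Graph of the Moore--Penrose inverse A^+ of A:
   mp_graph A y x  <->  y is in D(A^+) = R(A) (+) R(A)^perp and x = A^+ y,
   i.e. x in N(A)^perp and y - A x in R(A)^perp. *)
Definition mp_graph (R : realType) (V : lmodType R[i]) (ip : V -> V -> R[i])
  (A : V -> V) (y x : V) : Prop :=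
  (forall n : V, A n = 0 -> ip x n = 0) /\
  (forall w : V, ip (y - A x) (A w) = 0).

Definition ipA (R : realType) (V : lmodType R[i]) (ip : V -> V -> R[i])
  (A : V -> V) (x z : V) : R[i] := ip (A x) z.

Definition normA (R : realType) (V : lmodType R[i]) (ip : V -> V -> R[i])
  (A : V -> V) (z : V) : R := Num.sqrt (@complex.Re R (ip (A z) z)).

Definition opnormA (R : realType) (V : lmodType R[i]) (ip : V -> V -> R[i])
  (A T : V -> V) : R :=
  sup [set normA ip A (T z) | z in [set z | normA ip A z = 1]].

Definition dwA (R : realType) (V : lmodType R[i]) (ip : V -> V -> R[i])
  (A T : V -> V) : R :=
  sup [set Num.sqrt (@Normc.normc R (ipA ip A (T z) z) ^+ 2 + normA ip A (T z) ^+ 4)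
      | z in [set z | normA ip A z = 1]].

(* Write p(u,v) = <Au,v> and q(u) = p(u,u) = ||u||_A^2: p is a semi-inner
   product, and the Moore-Penrose condition forces A S^# = S^* A, i.e.
   p(S^# u, v) = p(u, S v).  For z with q(z) = 1 put X = |<Sz,z>_A|^2,
   a = q(Sz), b = q(S^# z) and d = q(S^# S z).  Cauchy-Schwarz for p gives
   X <= a, X <= b and a^2 <= d, hence (X + a^2)^2 <= (X + d)^2 <= (a+d)(b+d);
   and b + d, a + d are the real parts of <Mz,z>_A for the two operators M of
   the statement, so they are bounded by the A-norms of these operators.
   This last step needs S (hence S^#) to be A-bounded: for R with AR = S^*A,
   B = RS is p-symmetric and norm-bounded, so iterating Cauchy-Schwarz gives
   q(Bu)^(2^k) <= q(B^(2^k) u) q(u)^(2^k - 1), which forces q(Bu) <= c q(u)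
   as k grows. *)

From HB Require Import structures.
From mathcomp Require Import all_boot all_order all_algebra.
From mathcomp Require Import boolp classical_sets reals complex ring lra.
Import Order.TTheory GRing.Theory Num.Theory.
Local Open Scope ring_scope.

Section RealInequalities.
Context {R : realType}.
Implicit Types x r t D M P : R.

Lemma bernoulli_ler x n : 0 <= x -> 1 + x *+ n <= (1 + x) ^+ n.
Proof.
move=> x0; elim: n => [|n IH]; first by rewrite mulr0n addr0 expr0.
have xxn : 0 <= x * x *+ n by rewrite mulrn_wge0 // mulr_ge0.
rewrite exprS; apply: le_trans (ler_wpM2l _ IH); last by rewrite addr_ge0.
rewrite mulrSr mulrDl mul1r mulrDr mulr1 mulrnAr; lra.
Qed.

Lemma expr_unbounded x M : 1 < x -> exists n, M < x ^+ n.
Proof.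
move=> x1; have x1_gt0 : 0 < x - 1 by rewrite subr_gt0.
pose n := Num.bound (`|M| / (x - 1)).
exists n; apply: le_lt_trans (ler_norm M) _.
have := archi_boundP (divr_ge0 (normr_ge0 M) (ltW x1_gt0)).
rewrite -/n ltr_pdivrMr // mulrC mulr_natr => hM.
have := bernoulli_ler (x - 1) n (ltW x1_gt0); rewrite [1 + (x - 1)]addrC subrK.
by move=> h; apply: lt_le_trans hM (le_trans _ h); rewrite lerDr.
Qed.

Lemma le_of_pow2_bound r t D : 0 <= t ->
  (forall k, r ^+ (2 ^ k) <= D * t ^+ (2 ^ k).-1) -> r <= t.
Proof.
move=> t0 hk; rewrite leNgt; apply/negP => tr.
have r0 : 0 < r by apply: le_lt_trans tr.
have [t_eq0 | t_neq0] := eqVneq t 0.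
  by have := hk 1%N; rewrite t_eq0 expr1 mulr0 leNgt exprn_gt0.
have t_gt0 : 0 < t by rewrite lt_def t_neq0.
have rho1 : 1 < r / t by rewrite ltr_pdivlMr // mul1r.
have [n hn] := expr_unbounded _ (D / r) rho1.
have nm : (n <= (2 ^ n).-1)%N by rewrite -ltnS prednK ?expn_gt0 // ltn_expl.
have := hk n; rewrite -(prednK (expn_gt0 2 n)) exprS.
rewrite -[r in r ^+ _](divfK t_neq0) exprMn mulrA ler_pM2r ?exprn_gt0 //.
rewrite mulrC -ler_pdivlMr // leNgt => /negP; apply.
by apply: lt_le_trans hn _; rewrite ler_weXn2l // ltW.
Qed.

Lemma sqr_addr_le_mul {X a b d : R} : 0 <= X -> X <= a -> X <= b -> a ^+ 2 <= d ->
  (X + a ^+ 2) ^+ 2 <= (a + d) * (b + d).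
Proof.
move=> X0 Xa Xb ad.
have a2 : 0 <= a ^+ 2 by exact: sqr_ge0.
have : (X + a ^+ 2) ^+ 2 <= (X + d) ^+ 2 by rewrite ler_sqr ?nnegrE; lra.
nra.
Qed.

Lemma sup_ge0 (E : set R) : (forall x, E x -> 0 <= x) -> 0 <= sup E.
Proof.
move=> E0; have [hsup | nosup] := pselect (has_sup E); last by rewrite sup_out.
have [[x Ex] _] := hsup.
exact: le_trans (E0 x Ex) (sup_upper_bound hsup Ex).
Qed.

Lemma sup_sqr_le (E : set R) P : 0 <= P ->
  (forall x, E x -> 0 <= x /\ x ^+ 2 <= P) -> sup E ^+ 2 <= P.
Proof.
move=> P0 hE.
have supE0 : 0 <= sup E by apply: sup_ge0 => x /hE [].
rewrite -(sqr_sqrtr P0) ler_sqr ?nnegrE ?sqrtr_ge0 //.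
have [-> | /set0P nE] := eqVneq E set0; first by rewrite sup0 sqrtr_ge0.
apply: ge_sup nE _ => x /hE [x0 xP].
by rewrite -(ger0_norm x0) -sqrtr_sqr ler_wsqrtr.
Qed.

End RealInequalities.

Definition semi_inner_product {R : realType} {V : lmodType R[i]}
    (f : V -> V -> R[i]) : Prop :=
  [/\ forall (a : R[i]) x y z, f (a *: x + y) z = a * f x z + f y z,
      forall x y, f y x = (f x y)^* & forall x, 0 <= f x x].

Definition sqnorm {R : realType} {V : lmodType R[i]} (f : V -> V -> R[i])
    (x : V) : R :=
  complex.Re (f x x).

Definition sqnorm_bounded {R : realType} {V : lmodType R[i]}
    (f : V -> V -> R[i]) (M : V -> V) : Prop :=
  exists2 c, 0 <= c & forall x, sqnorm f (M x) <= c * sqnorm f x.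

Lemma Re_le_normc {R : realType} (c : R[i]) : complex.Re c <= Normc.normc c.
Proof.
case: c => a b /=; apply: le_trans (ler_norm a) _.
by rewrite -sqrtr_sqr ler_wsqrtr // lerDl sqr_ge0.
Qed.

Section SemiInnerProduct.
Context {R : realType} {V : lmodType R[i]} {f : V -> V -> R[i]}.
Hypothesis hf : semi_inner_product f.
Local Notation q := (sqnorm f).

Let flin a x y z : f (a *: x + y) z = a * f x z + f y z. Proof. by case: hf. Qed.
Let fpos x : 0 <= f x x. Proof. by case: hf. Qed.

Lemma formC x y : f y x = (f x y)^*. Proof. by case: hf. Qed.

Lemma formDl x y z : f (x + y) z = f x z + f y z.
Proof. by have := flin 1 x y z; rewrite scale1r mul1r. Qed.

Lemma formZl a x z : f (a *: x) z = a * f x z.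
Proof.
have f0 : f 0 z = 0 by apply: (addIr (f 0 z)); rewrite -formDl !add0r.
by rewrite -[a *: x]addr0 flin f0 addr0.
Qed.

Lemma formNl x z : f (- x) z = - f x z.
Proof. by rewrite -scaleN1r formZl mulN1r. Qed.

Lemma formBl x y z : f (x - y) z = f x z - f y z.
Proof. by rewrite formDl formNl. Qed.

Lemma formDr x y z : f z (x + y) = f z x + f z y.
Proof. by rewrite formC formDl rmorphD /= -!formC. Qed.

Lemma formZr a x z : f z (a *: x) = a^* * f z x.
Proof. by rewrite formC formZl rmorphM /= -!formC. Qed.

Lemma formNr x z : f z (- x) = - f z x.
Proof. by rewrite formC formNl rmorphN /= -formC. Qed.

Lemma formBr x y z : f z (x - y) = f z x - f z y.
Proof. by rewrite formDr formNr. Qed.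

Lemma conj_form_diag x : (f x x)^* = f x x.
Proof. exact/conj_Creal/ger0_real. Qed.

Lemma form_diagE x : f x x = (q x)%:C%C.
Proof. by rewrite RRe_real // ger0_real. Qed.

Lemma sqnorm_ge0 x : 0 <= q x.
Proof. by rewrite -ler0c -form_diagE. Qed.

Lemma Re_formC x y : complex.Re (f y x) = complex.Re (f x y).
Proof. by rewrite formC; case: (f x y). Qed.

Lemma normc_formC x y : Normc.normc (f y x) = Normc.normc (f x y).
Proof.
by apply: complexI; change (`|f y x| = `|f x y|); rewrite formC norm_conjC.
Qed.

Let form_CS_nz x y : f y y != 0 -> `|f x y| ^+ 2 <= f x x * f y y.
Proof.
move=> yy_neq0; have yy_gt0 : 0 < f y y by rewrite lt_def yy_neq0 fpos.
have := fpos (f y y *: x - f x y *: y).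
have -> : f (f y y *: x - f x y *: y) (f y y *: x - f x y *: y) =
    f y y * (f y y * f x x - f x y * (f x y)^*).
  by rewrite !(formBl, formZl, formBr, formZr) conj_form_diag (formC x y); ring.
by rewrite pmulr_rge0 // subr_ge0 normCK [f x x * _]mulrC.
Qed.

Lemma form_CS x y : `|f x y| ^+ 2 <= f x x * f y y.
Proof.
have [yy0 | ] := eqVneq (f y y) 0; last exact: form_CS_nz.
have [xx0 | xx_neq0] := eqVneq (f x x) 0; last first.
  by rewrite (formC y x) norm_conjC mulrC; exact: form_CS_nz.
have := fpos (x - f x y *: y).
have -> : f (x - f x y *: y) (x - f x y *: y) = - (f x y * (f x y)^*) *+ 2.
  by rewrite !(formBl, formZl, formBr, formZr) xx0 yy0 (formC x y); ring.
by rewrite xx0 yy0 mulr0 pmulrn_lge0 // oppr_ge0 -normCK.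
Qed.

Lemma cauchy_schwarz x y : Normc.normc (f x y) ^+ 2 <= q x * q y.
Proof.
have := form_CS x y; rewrite !form_diagE -rmorphM.
by rewrite -[`|_|]/(Normc.normc (f x y))%:C%C -rmorphXn lecR.
Qed.

Lemma Re_form_le x y : complex.Re (f x y) <= Num.sqrt (q x) * Num.sqrt (q y).
Proof.
apply: le_trans (Re_le_normc _) _; apply: le_trans (ler_norm _) _.
by rewrite -sqrtrM ?sqnorm_ge0 // -sqrtr_sqr ler_wsqrtr // cauchy_schwarz.
Qed.

Lemma sqnormD_le x y : q (x + y) <= 2 * (q x + q y).
Proof.
have /complexI parallelogram :
    (q (x + y) + q (x - y))%:C%C = ((q x + q y) *+ 2)%:C%C.
  rewrite rmorphMn !rmorphD /= -!form_diagE.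
  by rewrite !(formDl, formNl, formDr, formNr); ring.
by rewrite mulr_natl -parallelogram lerDl sqnorm_ge0.
Qed.

Lemma sqnorm_bounded_sqrt {M : V -> V} {c : R} :
  (forall x, Num.sqrt (q (M x)) <= c * Num.sqrt (q x)) -> sqnorm_bounded f M.
Proof.
move=> hM; exists (c ^+ 2) => [|x]; first exact: sqr_ge0.
rewrite -[q (M x)]sqr_sqrtr ?sqnorm_ge0 // -[q x]sqr_sqrtr ?sqnorm_ge0 // -exprMn.
by rewrite lerXn2r ?nnegrE ?sqrtr_ge0 //; apply: le_trans (sqrtr_ge0 _) (hM x).
Qed.

Lemma sqnorm_boundedD {M N : V -> V} :
  sqnorm_bounded f M -> sqnorm_bounded f N -> sqnorm_bounded f (fun x => M x + N x).
Proof.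
move=> [c c0 hM] [d d0 hN]; exists (2 * (c + d)) => [|x].
  by rewrite mulr_ge0 ?addr_ge0.
apply: le_trans (sqnormD_le _ _) _.
by rewrite -mulrA ler_wpM2l // mulrDl lerD.
Qed.

Lemma sqnorm_bounded_comp {M N : V -> V} :
  sqnorm_bounded f M -> sqnorm_bounded f N -> sqnorm_bounded f (fun x => M (N x)).
Proof.
move=> [c c0 hM] [d d0 hN]; exists (c * d) => [|x]; first exact: mulr_ge0.
by apply: le_trans (hM _) _; rewrite -mulrA ler_wpM2l.
Qed.

Lemma sqnorm_iter_le B c n x : 0 <= c -> (forall y, q (B y) <= c * q y) ->
  q (iter n B x) <= c ^+ n * q x.
Proof.
move=> c0 hB; elim: n => [|n IH]; first by rewrite mul1r.
by rewrite iterS exprS -mulrA; apply: le_trans (hB _) _; rewrite ler_wpM2l.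
Qed.

Lemma Re_form_le_sqrt x y c : 0 <= c -> q x <= c * q y ->
  complex.Re (f x y) <= Num.sqrt c * q y.
Proof.
move=> c0 hxy; apply: le_trans (Re_form_le x y) _.
rewrite -{2}[q y]sqr_sqrtr ?sqnorm_ge0 // expr2 mulrA ler_wpM2r ?sqrtr_ge0 //.
by rewrite -sqrtrM // ler_wsqrtr.
Qed.

Lemma sqnorm_bounded_adjoint {S T : V -> V} : (forall x y, f (T x) y = f x (S y)) ->
  sqnorm_bounded f S -> sqnorm_bounded f T.
Proof.
move=> hTS [b b0 hS]; exists b => // z.
have hle : q (T z) <= Num.sqrt (q z) * Num.sqrt (b * q (T z)).
  rewrite {1}/sqnorm hTS; apply: le_trans (Re_form_le _ _) _.
  by rewrite ler_wpM2l ?sqrtr_ge0 // ler_wsqrtr.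
have [-> | Tz_neq0] := eqVneq (q (T z)) 0; first by rewrite mulr_ge0 ?sqnorm_ge0.
have Tz_gt0 : 0 < q (T z) by rewrite lt_def Tz_neq0 sqnorm_ge0.
move: hle; rewrite -ler_sqr ?nnegrE ?mulr_ge0 ?sqrtr_ge0 ?sqnorm_ge0 //.
rewrite exprMn !sqr_sqrtr ?mulr_ge0 ?sqnorm_ge0 // => hle.
rewrite -(ler_pM2r Tz_gt0) -expr2; apply: le_trans hle _.
by rewrite mulrA [q z * b]mulrC.
Qed.

Section SymmetricMap.
Context {B : V -> V}.
Hypothesis hB : forall x y, f (B x) y = f x (B y).

Lemma form_iter_sym m x y : f (iter m B x) y = f x (iter m B y).
Proof. by elim: m x y => // m IH x y; rewrite iterS hB IH -iterSr. Qed.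

Lemma sqnorm_iter_sqr m u : q (iter m B u) ^+ 2 <= q u * q (iter (m + m) B u).
Proof.
apply: le_trans (cauchy_schwarz _ _); rewrite ler_sqr ?nnegrE ?sqnorm_ge0 //.
  by rewrite /sqnorm form_iter_sym -iterD Re_le_normc.
by case: (f _ _) => a b; rewrite /= sqrtr_ge0.
Qed.

Lemma sqnorm_iter_pow2 k u :
  q (B u) ^+ (2 ^ k) <= q (iter (2 ^ k) B u) * q u ^+ (2 ^ k).-1.
Proof.
elim: k => [|k IH]; first by rewrite expr0 mulr1.
have pred_double n : (0 < n)%N -> (n + n).-1 = (n.-1 + n.-1).+1.
  by case: n => // n _; rewrite addSn addnS.
rewrite expnS mul2n -addnn exprD -expr2.
apply: (le_trans (y := (q (iter (2 ^ k) B u) * q u ^+ (2 ^ k).-1) ^+ 2)).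
  by rewrite ler_sqr ?nnegrE ?mulr_ge0 ?exprn_ge0 ?sqnorm_ge0.
rewrite exprMn; apply: le_trans (ler_wpM2r (sqr_ge0 _) (sqnorm_iter_sqr _ u)) _.
rewrite pred_double ?expn_gt0 // (exprS (q u)) exprD -expr2.
by rewrite [X in _ <= X]mulrCA [X in _ <= X]mulrA.
Qed.

Lemma sqnorm_sym_le c D u : 0 <= c ->
  (forall n, q (iter n B u) <= D * c ^+ n) -> q (B u) <= c * q u.
Proof.
move=> c0 hD; apply: (le_of_pow2_bound _ _ (D * c)).
  by rewrite mulr_ge0 ?sqnorm_ge0.
move=> k; apply: le_trans (sqnorm_iter_pow2 k u) _.
rewrite exprMn mulrA; apply: ler_wpM2r; first exact/exprn_ge0/sqnorm_ge0.
by rewrite -mulrA -exprS prednK ?expn_gt0.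
Qed.

End SymmetricMap.

End SemiInnerProduct.

Lemma inner_product_semi {R : realType} {V : lmodType R[i]} {ip : V -> V -> R[i]} :
  inner_product ip -> semi_inner_product ip.
Proof. by case. Qed.

Lemma bounded_op_sqnorm_bounded {R : realType} {V : lmodType R[i]}
    {ip : V -> V -> R[i]} {L : V -> V} :
  inner_product ip -> bounded_op ip L -> sqnorm_bounded ip L.
Proof.
by move=> hip [_ [M hM]]; exact: (sqnorm_bounded_sqrt (inner_product_semi hip) hM).
Qed.

Section LinearMap.
Context {R : realType} {V : lmodType R[i]} {L : V -> V}.
Hypothesis hL : forall (a : R[i]) x y, L (a *: x + y) = a *: L x + L y.

Lemma linmapD x y : L (x + y) = L x + L y.
Proof. by have := hL 1 x y; rewrite !scale1r. Qed.

Lemma linmapZ a x : L (a *: x) = a *: L x.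
Proof.
have L0 : L 0 = 0 by apply: (addIr (L 0)); rewrite -linmapD !add0r.
by have := hL a x 0; rewrite addr0 L0 addr0.
Qed.

Lemma linmapB x y : L (x - y) = L x - L y.
Proof. by rewrite linmapD -scaleN1r linmapZ scaleN1r. Qed.

End LinearMap.

Lemma sesquilinear_eq0_diag {R : realType} {V : lmodType R[i]}
    (g : V -> V -> R[i]) :
  (forall x y z, g (x + y) z = g x z + g y z) ->
  (forall a x z, g (a *: x) z = a * g x z) ->
  (forall x y z, g z (x + y) = g z x + g z y) ->
  (forall a x z, g z (a *: x) = a^* * g z x) ->
  (forall x, g x x = 0) -> forall x y, g x y = 0.
Proof.
move=> gDl gZl gDr gZr g0 x y.
have := g0 (x + y); rewrite gDl !gDr !g0 add0r addr0 => /eqP.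
rewrite addr_eq0 => /eqP gyx.
have := g0 (x + 'i *: y); rewrite gDl !gDr !gZl !gZr !g0 gyx conjCi.
rewrite !mulr0 add0r addr0 mulrNN -mulr2n -mulrnAr => /eqP.
by rewrite mulf_eq0 (negPf (neq0Ci _)) mulrn_eq0 /= => /eqP ->; rewrite oppr0.
Qed.

Lemma positive_op_selfadjoint {R : realType} {V : lmodType R[i]}
    {ip : V -> V -> R[i]} {A : V -> V} :
  inner_product ip -> positive_op ip A -> forall x y, ip (A x) y = ip x (A y).
Proof.
move=> /inner_product_semi hip [[Alin _] Apos] x y; apply/eqP; rewrite -subr_eq0.
apply/eqP; move: x y; apply: sesquilinear_eq0_diag => [u v w|a u w|u v w|a u w|u].
- by rewrite (linmapD Alin) !(formDl hip); ring.
- by rewrite (linmapZ Alin) !(formZl hip); ring.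
- by rewrite (linmapD Alin) !(formDr hip); ring.
- by rewrite (linmapZ Alin) !(formZr hip); ring.
- by rewrite (formC hip (A u)) conj_Creal ?subrr // ger0_real.
Qed.

Lemma semi_inner_ipA {R : realType} {V : lmodType R[i]}
    {ip : V -> V -> R[i]} {A : V -> V} :
  inner_product ip -> positive_op ip A -> semi_inner_product (ipA ip A).
Proof.
move=> hip hA; have hip' := inner_product_semi hip.
have [[Alin _] Apos] := hA; split=> [a x y z|x y|x]; last exact: Apos.
  by rewrite /ipA Alin (formDl hip') (formZl hip').
by rewrite /ipA (positive_op_selfadjoint hip hA) (formC hip').
Qed.

Lemma opnormA_ge0 {R : realType} {V : lmodType R[i]} (ip : V -> V -> R[i])
    (A M : V -> V) :
  0 <= opnormA ip A M.
Proof. by apply: sup_ge0 => _ [z _ <-]; exact: sqrtr_ge0. Qed.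

Lemma dwA_sqr_le {R : realType} {V : lmodType R[i]} (ip : V -> V -> R[i])
    (A T : V -> V) (P : R) : 0 <= P ->
  (forall z, normA ip A z = 1 ->
    (Normc.normc (ipA ip A (T z) z) ^+ 2 + normA ip A (T z) ^+ 4) ^+ 2
      <= P ^+ 2) ->
  dwA ip A T ^+ 2 <= P.
Proof.
move=> P0 hP; apply: sup_sqr_le => // _ [z z1 <-].
have Y0 : 0 <= Normc.normc (ipA ip A (T z) z) ^+ 2 + normA ip A (T z) ^+ 4.
  by rewrite addr_ge0 ?sqr_ge0 ?exprn_even_ge0.
split; first exact: sqrtr_ge0.
by rewrite sqr_sqrtr // -ler_sqr ?nnegrE //; exact: hP.
Qed.

Section SharpOperator.
Context {R : realType} {V : lmodType R[i]} {ip : V -> V -> R[i]}.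
Context {A S Sadj T : V -> V}.
Hypotheses (hip : inner_product ip) (hA : positive_op ip A).
Hypotheses (hS : bounded_op ip S) (hadj : is_adjoint ip S Sadj).
Hypotheses (hBA : in_BA ip A Sadj) (hmp : forall z, mp_graph ip A (Sadj (A z)) (T z)).

Let hip' := inner_product_semi hip.
Let hp := semi_inner_ipA hip hA.
Local Notation p := (ipA ip A).
Local Notation qA := (sqnorm (ipA ip A)).

Lemma ipA_intertwine {X : V -> V} : (forall u, A (X u) = Sadj (A u)) ->
  forall u v, p (X u) v = p u (S v).
Proof. by move=> AX u v; rewrite /ipA AX (formC hip') -hadj -(formC hip'). Qed.

(* With Rop as in [in_BA], A (Rop u - T u) is both in the range of A and
   orthogonal to it. *)
Lemma A_sharp u : A (T u) = Sadj (A u).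
Proof.
have [[Alin _] _] := hA; case: hBA => Rop [_ ARop]; have [_ orth] := hmp u.
have := orth (Rop u - T u); rewrite (linmapB Alin) ARop.
by case: hip => _ _ _ /[apply] /eqP; rewrite subr_eq0 => /eqP.
Qed.

Lemma ipA_sharp u v : p (T u) v = p u (S v).
Proof. exact: ipA_intertwine A_sharp u v. Qed.

Lemma sqnormA_le_sqnorm : exists2 K, 0 <= K & forall u, qA u <= K * sqnorm ip u.
Proof.
have [c c0 hc] := bounded_op_sqnorm_bounded hip (proj1 hA).
exists (Num.sqrt c) => [|u]; first exact: sqrtr_ge0.
exact: (Re_form_le_sqrt hip' _ _ _ c0 (hc u)).
Qed.

Lemma sqnorm_bounded_S : sqnorm_bounded p S.
Proof.
case: hBA => Rop [Rop_bd ARop]; pose B u := Rop (S u).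
have ipA_B x y : p (B x) y = p (S x) (S y) := ipA_intertwine ARop (S x) y.
have B_sym x y : p (B x) y = p x (B y).
  by rewrite (formC hp (B y)) !ipA_B -formC.
have [c c0 hB] : sqnorm_bounded ip B.
  exact: sqnorm_bounded_comp (bounded_op_sqnorm_bounded hip Rop_bd)
    (bounded_op_sqnorm_bounded hip hS).
have [K K0 hK] := sqnormA_le_sqnorm.
exists (Num.sqrt c) => [|u]; first exact: sqrtr_ge0.
rewrite {1}/sqnorm -ipA_B; apply: Re_form_le_sqrt => //.
apply: (sqnorm_sym_le hp B_sym _ (K * sqnorm ip u)) => // n.
apply: le_trans (hK _) _; rewrite -mulrA ler_wpM2l // mulrC.
exact: sqnorm_iter_le.
Qed.

Lemma sqnorm_bounded_sharp : sqnorm_bounded p T.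
Proof. exact: (sqnorm_bounded_adjoint hp ipA_sharp sqnorm_bounded_S). Qed.

Lemma sqnormA_unit z : normA ip A z = 1 -> qA z = 1.
Proof.
by move=> z1; rewrite -[qA z]sqr_sqrtr ?(sqnorm_ge0 hp) // [Num.sqrt _]z1 expr1n.
Qed.

Lemma Re_ipA_le_opnormA M z : sqnorm_bounded p M -> normA ip A z = 1 ->
  complex.Re (p (M z) z) <= opnormA ip A M.
Proof.
move=> [c c0 hM] z1; apply: le_trans (Re_form_le hp _ _) _.
rewrite -[Num.sqrt (qA z)]/(normA ip A z) z1 mulr1.
apply: sup_upper_bound; last by exists z.
split; first by exists (normA ip A (M z)), z.
exists (Num.sqrt c) => _ [w w1 <-]; rewrite /normA ler_wsqrtr //.
by have := hM w; rewrite (sqnormA_unit _ w1) mulr1.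
Qed.

Lemma Re_ipA_SSsharp u : complex.Re (p (S (T u)) u) = qA (T u).
Proof. by rewrite (Re_formC hp) -ipA_sharp. Qed.

Lemma Re_ipA_SSsharpD z :
  complex.Re (p (S (T z) + T (S (T (S z)))) z) = qA (T z) + qA (T (S z)).
Proof. by rewrite (formDl hp) raddfD /= ipA_sharp !Re_ipA_SSsharp. Qed.

Lemma Re_ipA_SsharpSD z :
  complex.Re (p (T (S z) + T (S (T (S z)))) z) = qA (S z) + qA (T (S z)).
Proof. by rewrite (formDl hp) raddfD /= !ipA_sharp Re_ipA_SSsharp. Qed.

Lemma normc_ipA_S_le_sharp z : normA ip A z = 1 ->
  Normc.normc (p (S z) z) ^+ 2 <= qA (T z).
Proof.
move=> z1; rewrite -(normc_formC hp) -ipA_sharp.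
by have := cauchy_schwarz hp (T z) z; rewrite (sqnormA_unit _ z1) mulr1.
Qed.

Lemma sqr_sqnormA_S_le z : normA ip A z = 1 -> qA (S z) ^+ 2 <= qA (T (S z)).
Proof.
move=> z1; have := Re_form_le hp (T (S z)) z.
rewrite ipA_sharp -[Num.sqrt (qA z)]/(normA ip A z) z1 mulr1.
rewrite -ler_sqr ?nnegrE ?sqrtr_ge0 ?(sqnorm_ge0 hp) //.
by rewrite sqr_sqrtr ?(sqnorm_ge0 hp).
Qed.

Lemma dwA_term_le z : normA ip A z = 1 ->
  (Normc.normc (p (S z) z) ^+ 2 + normA ip A (S z) ^+ 4) ^+ 2 <=
    opnormA ip A (fun z => S (T z) + T (S (T (S z)))) *
    opnormA ip A (fun z => T (S z) + T (S (T (S z)))).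
Proof.
move=> z1; have [Sb Tb] := (sqnorm_bounded_S, sqnorm_bounded_sharp).
have TSTSb :=
  sqnorm_bounded_comp Tb (sqnorm_bounded_comp Sb (sqnorm_bounded_comp Tb Sb)).
have XSz : Normc.normc (p (S z) z) ^+ 2 <= qA (S z).
  by have := cauchy_schwarz hp (S z) z; rewrite (sqnormA_unit _ z1) mulr1.
have -> : normA ip A (S z) ^+ 4 = qA (S z) ^+ 2.
  by rewrite (exprM _ 2 2) sqr_sqrtr ?(sqnorm_ge0 hp).
rewrite mulrC; apply: le_trans (sqr_addr_le_mul (sqr_ge0 _) XSz
  (normc_ipA_S_le_sharp _ z1) (sqr_sqnormA_S_le _ z1)) _.
apply: ler_pM; rewrite ?addr_ge0 ?(sqnorm_ge0 hp) //.
- rewrite -Re_ipA_SsharpSD; apply: Re_ipA_le_opnormA z1.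
  exact: (sqnorm_boundedD hp (sqnorm_bounded_comp Tb Sb) TSTSb).
- rewrite -Re_ipA_SSsharpD; apply: Re_ipA_le_opnormA z1.
  exact: (sqnorm_boundedD hp (sqnorm_bounded_comp Sb Tb) TSTSb).
Qed.

End SharpOperator.

Theorem corollary2p26 (R : realType) (V : lmodType R[i]) (ip : V -> V -> R[i])
  (A S Sadj Ssh : V -> V) :
  inner_product ip -> complete_ip ip ->
  positive_op ip A ->
  bounded_op ip S -> is_adjoint ip S Sadj -> in_BA ip A Sadj ->
  (forall z : V, mp_graph ip A (Sadj (A z)) (Ssh z)) ->
  dwA ip A S ^+ 2 <=
    Num.sqrt (opnormA ip A (fun z => S (Ssh z) + Ssh (S (Ssh (S z))))) *
    Num.sqrt (opnormA ip A (fun z => Ssh (S z) + Ssh (S (Ssh (S z))))).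
Proof.
move=> hip _ hA hS hadj hBA hmp.
apply: dwA_sqr_le; first by rewrite mulr_ge0 ?sqrtr_ge0.
move=> z z1; rewrite exprMn !sqr_sqrtr ?opnormA_ge0 //.
exact: (dwA_term_le hip hA hS hadj hBA hmp _ z1).
Qed.
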